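(* For all $x$ with $|x|<1/4$, \[ \sum_{n=0}^\infty\binom{2n}{n}H_{2n+1}x^n=\frac1{\sqrt{1-4x}}\ln\Bigl(\frac{1+\sqrt{1-4x}}{2(1-4x)}\Bigr)+\frac{\arcsin(2\sqrt x)}{2\sqrt x}, \] \[ \sum_{n=0}^\infty(-1)^n\binom{2n}{n}H_{2n+1}x^n=\frac1{\sqrt{1+4x}}\ln\Bigl(\frac{1+\sqrt{1+4x}}{2(1+4x)}\Bigr)+\frac{\ln\bigl(2\sqrt x+\sqrt{1+4x}\bigr)}{2\sqrt x}. \]
   Context: $H_n=\sum_{j=1}^n\frac1j$ is the $n$th harmonic number. The functions $\frac{\arcsin(2\sqrt x)}{2\sqrt x}=\sum_{n\ge0}\binom{2n}{n}\frac{x^n}{2n+1}$ and $\frac{\ln(2\sqrt x+\sqrt{1+4x})}{2\sqrt x}=\sum_{n\ge0}(-1)^n\binom{2n}{n}\frac{x^n}{2n+1}$ are understood as these even analytic functions of $\sqrt x$ (principal branches for $x<0$, value $1$ at $x=0$). *)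

From Stdlib Require Import Reals.
From Coquelicot Require Import Coquelicot.
Open Scope R_scope.

Fixpoint harmonic (n : nat) : R :=
  match n with
  | O => 0
  | S m => harmonic m + / INR (S m)
  end.

Definition cbin (n : nat) : R := Binomial.C (2 * n) n.

(* arcsin(2 sqrt x)/(2 sqrt x), as an even analytic function of sqrt x:
   x > 0 : asin(2 sqrt x)/(2 sqrt x);  x = 0 : 1;
   x < 0 : principal branch, sqrt x = i s with s = sqrt(-x):
           asin(2 i s)/(2 i s) = asinh(2 s)/(2 s) = ln(2 s + sqrt(1+4s^2))/(2 s). *)
Definition asin_ratio (x : R) : R :=
  if Rlt_dec 0 x then asin (2 * sqrt x) / (2 * sqrt x)
  else if Rlt_dec x 0 then
    ln (2 * sqrt (- x) + sqrt (1 - 4 * x)) / (2 * sqrt (- x))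
  else 1.

(* ln(2 sqrt x + sqrt(1+4x))/(2 sqrt x), as an even analytic function of sqrt x:
   x > 0 : as written;  x = 0 : 1;
   x < 0 : sqrt x = i s, ln(2 i s + sqrt(1-4s^2))/(2 i s) = asin(2 s)/(2 s). *)
Definition asinh_ratio (x : R) : R :=
  if Rlt_dec 0 x then ln (2 * sqrt x + sqrt (1 + 4 * x)) / (2 * sqrt x)
  else if Rlt_dec x 0 then asin (2 * sqrt (- x)) / (2 * sqrt (- x))
  else 1.

From Stdlib Require Import Reals Lra Lia.
From Coquelicot Require Import Coquelicot.
Open Scope R_scope.

(* Since H_(2n+1) = H_(2n) + 1/(2n+1), the series splits as D + B with
   D(x) = sum C(2n,n) H_(2n) x^n and B(x) = sum C(2n,n) x^n / (2n+1).  Put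
   A(x) = sum C(2n,n) x^n.  The recurrence (n+1) C(2n+2,n+1) = 2(2n+1) C(2n,n)
   says (1-4x) A' = 2A, so A = 1/sqrt(1-4x); for the coefficients of D it gives
   (1-4x) D' - 2D = 2A + (A-1)/(2x), and in both cases sqrt(1-4x) is an
   integrating factor.  Finally B + 2x B' = A says that s B(s^2) and s B(-s^2)
   are antiderivatives of 1/sqrt(1-4s^2) and 1/sqrt(1+4s^2), i.e. asin(2s)/2
   and asinh(2s)/2.  Each closed form is obtained by comparing derivatives on
   a disc and values at 0.  The alternating series is the first one at -x. *)

Lemma cbin_0 : cbin 0 = 1.
Proof. unfold cbin, Binomial.C; simpl; lra. Qed.

Lemma cbin_pos n : 0 < cbin n.
Proof.
  unfold cbin, Binomial.C.
  apply Rdiv_lt_0_compat; [apply INR_fact_lt_0|].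
  apply Rmult_lt_0_compat; apply INR_fact_lt_0.
Qed.

Lemma cbin_S n : INR (S n) * cbin (S n) = 2 * (2 * INR n + 1) * cbin n.
Proof.
  unfold cbin, Binomial.C.
  replace (2 * S n - S n)%nat with (S n) by lia.
  replace (2 * n - n)%nat with n by lia.
  replace (2 * S n)%nat with (S (S (2 * n))) by lia.
  rewrite !fact_simpl, !mult_INR, !S_INR, mult_INR; simpl (INR 2).
  pose proof (INR_fact_neq_0 n); pose proof (pos_INR n).
  field; lra.
Qed.

Lemma cbin_le_pow4 n : cbin n <= 4 ^ n.
Proof.
  induction n as [|n IH]; [rewrite cbin_0; simpl; lra|].
  pose proof (cbin_S n) as Hrec; pose proof (cbin_pos n); pose proof (pos_INR n).
  rewrite S_INR in Hrec; simpl (4 ^ S n).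
  apply Rmult_le_reg_l with (INR n + 1); nra.
Qed.

Lemma harmonic_bounds n : 0 <= harmonic n <= INR n.
Proof.
  induction n as [|n IH]; [simpl; lra|].
  change (harmonic (S n)) with (harmonic n + / INR (S n)).
  pose proof (pos_INR n).
  assert (0 < / INR (S n) <= 1).
  { rewrite S_INR; split; [apply Rinv_0_lt_compat; lra|].
    rewrite <- Rinv_1; apply Rinv_le_contravar; lra. }
  rewrite S_INR in *; lra.
Qed.

Lemma CV_radius_le_of_Rabs_le (a b : nat -> R) :
  (forall n, Rabs (a n) <= Rabs (b n)) -> Rbar_le (CV_radius b) (CV_radius a).
Proof.
  intros Hab.
  destruct (CV_radius_bounded a) as [Hub _], (CV_radius_bounded b) as [_ Hlub].
  apply Hlub; intros r [M HM]; apply Hub; exists M; intros n.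
  eapply Rle_trans; [|apply (HM n)].
  rewrite !Rabs_mult; apply Rmult_le_compat_r; [apply Rabs_pos|apply Hab].
Qed.

Lemma CV_radius_ge_quarter (c : nat -> R) :
  (forall n, Rabs (c n) <= INR (S n) * 4 ^ S n) -> Rbar_le (/ 4) (CV_radius c).
Proof.
  intros Hc.
  assert (Hgeom : CV_radius (pow 4) = / 4).
  { apply CV_radius_finite_DAlembert; [intros n; apply pow_nonzero; lra|lra|].
    apply is_lim_seq_ext with (fun _ => 4); [|apply is_lim_seq_const].
    intros n; simpl.
    replace (4 * 4 ^ n / 4 ^ n) with 4 by (field; apply pow_nonzero; lra).
    rewrite Rabs_pos_eq; lra. }
  rewrite <- Hgeom, <- CV_radius_derive.
  apply CV_radius_le_of_Rabs_le; intros n; unfold PS_derive.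
  rewrite (Rabs_pos_eq (_ * _)); [apply Hc|].
  apply Rmult_le_pos; [apply pos_INR|apply pow_le; lra].
Qed.

Lemma PSeries_mul_x_derive (c : nat -> R) y :
  y * PSeries (PS_derive c) y = PSeries (fun n => INR n * c n) y.
Proof.
  rewrite <- PSeries_incr_1; apply PSeries_ext.
  intros [|n]; [simpl; unfold zero; simpl; ring|reflexivity].
Qed.

Lemma ex_pseries_INR_mul (c : nat -> R) y :
  Rbar_lt (Rabs y) (CV_radius c) -> ex_pseries (fun n => INR n * c n) y.
Proof.
  intros Hy; apply ex_pseries_ext with (PS_incr_1 (PS_derive c)).
  - intros [|n]; [simpl; unfold zero; simpl; ring|reflexivity].
  - apply ex_pseries_incr_1, ex_pseries_derive, Hy.
Qed.

Lemma PSeries_ode_of_recurrence (a b : R) (c e : nat -> R) y :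
  Rbar_lt (Rabs y) (CV_radius c) ->
  (forall n, INR (S n) * c (S n) - (a * INR n + b) * c n = e n) ->
  (1 - a * y) * PSeries (PS_derive c) y - b * PSeries c y = PSeries e y.
Proof.
  intros Hy Hrec.
  assert (Hc : ex_pseries c y) by (apply CV_radius_inside, Hy).
  assert (Hc' : ex_pseries (PS_derive c) y) by (apply ex_pseries_derive, Hy).
  assert (Hnc : ex_pseries (fun n => INR n * c n) y) by (apply ex_pseries_INR_mul, Hy).
  replace ((1 - a * y) * PSeries (PS_derive c) y - b * PSeries c y)
    with (PSeries (PS_derive c) y - a * (y * PSeries (PS_derive c) y) - b * PSeries c y)
    by ring.
  rewrite PSeries_mul_x_derive, <- (PSeries_scal a), <- (PSeries_scal b).
  rewrite <- !PSeries_minus;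
    try (apply ex_pseries_minus); try (apply ex_pseries_scal; [apply Rmult_comm|]); auto.
  apply PSeries_ext; intros n; rewrite <- Hrec.
  unfold PS_minus, PS_scal, PS_derive, plus, opp, scal; simpl; unfold mult; simpl; ring.
Qed.

Lemma is_derive_sqrt_mul_PSeries (c e : nat -> R) t :
  4 * t < 1 -> Rbar_lt (Rabs t) (CV_radius c) ->
  (forall n, INR (S n) * c (S n) - (4 * INR n + 2) * c n = e n) ->
  is_derive (fun t => sqrt (1 - 4 * t) * PSeries c t) t (PSeries e t / sqrt (1 - 4 * t)).
Proof.
  intros Ht Hc Hrec.
  rewrite <- (PSeries_ode_of_recurrence 4 2 c e t Hc Hrec).
  assert (Hs : 0 < sqrt (1 - 4 * t)) by (apply sqrt_lt_R0; lra).
  pose proof (sqrt_sqrt (1 - 4 * t) ltac:(lra)) as Hss.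
  auto_derive.
  - repeat split; [lra|apply ex_derive_PSeries, Hc].
  - rewrite Derive_PSeries by exact Hc.
    replace (1 + - (4 * t)) with (1 - 4 * t) by ring.
    set (s := sqrt (1 - 4 * t)) in *; rewrite <- Hss; field; lra.
Qed.

Lemma is_derive_ball_eq (f g h : R -> R) r :
  (forall y, Rabs y < r -> is_derive f y (h y)) ->
  (forall y, Rabs y < r -> is_derive g y (h y)) ->
  f 0 = g 0 -> forall y, Rabs y < r -> f y = g y.
Proof.
  intros Hf Hg H0 y Hy.
  assert (Hball : forall x, Rmin 0 y <= x <= Rmax 0 y -> Rabs x < r).
  { intros x; unfold Rmin, Rmax, Rabs in *;
      destruct (Rle_dec 0 y), (Rcase_abs x), (Rcase_abs y); lra. }
  assert (Hd : forall x, Rmin 0 y <= x <= Rmax 0 y -> is_derive (fun t => f t - g t) x 0).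
  { intros x Hx; replace 0 with (h x - h x) by ring.
    apply (is_derive_minus f g); [apply Hf|apply Hg]; apply Hball, Hx. }
  destruct (MVT_gen (fun t => f t - g t) 0 y (fun _ => 0)) as [z [_ Hz]].
  - intros x Hx; apply Hd; lra.
  - intros x Hx; apply continuity_pt_filterlim, (ex_derive_continuous (fun t => f t - g t)).
    exists 0; apply Hd, Hx.
  - lra.
Qed.

Definition cbin_over_odd (n : nat) : R := cbin n / INR (2 * n + 1).
Definition cbin_harmonic (n : nat) : R := cbin n * harmonic (2 * n).

Lemma Rabs_lt_CV_radius (c : nat -> R) y :
  Rbar_le (/ 4) (CV_radius c) -> Rabs y < / 4 -> Rbar_lt (Rabs y) (CV_radius c).
Proof. intros Hc Hy; exact (Rbar_lt_le_trans (Rabs y) (/ 4) _ Hy Hc). Qed.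

Lemma mul4_lt_1 y : Rabs y < / 4 -> 4 * y < 1.
Proof. pose proof (Rle_abs y); lra. Qed.

Lemma CV_radius_cbin : Rbar_le (/ 4) (CV_radius cbin).
Proof.
  apply CV_radius_ge_quarter; intros n.
  pose proof (cbin_pos n); pose proof (cbin_le_pow4 n); pose proof (pos_INR n).
  pose proof (pow_le 4 n ltac:(lra)).
  rewrite Rabs_pos_eq, S_INR by lra; simpl pow; nra.
Qed.

Lemma CV_radius_cbin_over_odd : Rbar_le (/ 4) (CV_radius cbin_over_odd).
Proof.
  apply CV_radius_ge_quarter; intros n; unfold cbin_over_odd.
  assert (Hodd : 1 <= INR (2 * n + 1)) by (rewrite <- INR_1; apply le_INR; lia).
  pose proof (cbin_pos n); pose proof (cbin_le_pow4 n); pose proof (pos_INR n).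
  pose proof (pow_le 4 n ltac:(lra)).
  assert (cbin n / INR (2 * n + 1) <= cbin n).
  { unfold Rdiv; rewrite <- (Rmult_1_r (cbin n)) at 2.
    apply Rmult_le_compat_l; [lra|].
    rewrite <- Rinv_1; apply Rinv_le_contravar; lra. }
  rewrite Rabs_pos_eq, S_INR by (apply Rdiv_le_0_compat; lra); simpl pow.
  assert (4 ^ n <= (INR n + 1) * (4 * 4 ^ n)) by nra.
  lra.
Qed.

Lemma CV_radius_cbin_harmonic : Rbar_le (/ 4) (CV_radius cbin_harmonic).
Proof.
  apply CV_radius_ge_quarter; intros n; unfold cbin_harmonic.
  pose proof (cbin_pos n); pose proof (cbin_le_pow4 n); pose proof (pos_INR n).
  pose proof (pow_le 4 n ltac:(lra)).
  pose proof (harmonic_bounds (2 * n)) as Hh; rewrite mult_INR in Hh; simpl (INR 2) in Hh.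
  rewrite Rabs_pos_eq, S_INR by (apply Rmult_le_pos; lra); simpl pow.
  apply Rle_trans with (4 ^ n * (2 * INR n)).
  - apply Rmult_le_compat; lra.
  - nra.
Qed.

Lemma PSeries_cbin y : Rabs y < / 4 -> PSeries cbin y = / sqrt (1 - 4 * y).
Proof.
  intros Hy; pose proof (mul4_lt_1 y Hy).
  assert (Hs : 0 < sqrt (1 - 4 * y)) by (apply sqrt_lt_R0; lra).
  enough (Hprod : sqrt (1 - 4 * y) * PSeries cbin y = 1)
    by (apply Rmult_eq_reg_l with (sqrt (1 - 4 * y)); [rewrite Hprod; field|]; lra).
  refine (is_derive_ball_eq (fun t => sqrt (1 - 4 * t) * PSeries cbin t)
            (fun _ => 1) (fun _ => 0) (/ 4) _ _ _ y Hy).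
  - intros t Ht.
    replace 0 with (PSeries (fun _ => 0) t / sqrt (1 - 4 * t))
      by (rewrite PSeries_const_0; unfold Rdiv; ring).
    apply is_derive_sqrt_mul_PSeries;
      [apply mul4_lt_1, Ht|apply Rabs_lt_CV_radius, Ht; apply CV_radius_cbin|].
    intros n; rewrite cbin_S; ring.
  - intros t _; exact (@is_derive_const R_AbsRing R_NormedModule 1 t).
  - rewrite PSeries_0, cbin_0, Rmult_0_r, Rminus_0_r, sqrt_1; ring.
Qed.

Lemma PSeries_cbin_shift y : Rabs y < / 4 ->
  PSeries (PS_decr_1 cbin) y = 4 / ((1 + sqrt (1 - 4 * y)) * sqrt (1 - 4 * y)).
Proof.
  intros Hy; pose proof (mul4_lt_1 y Hy).
  assert (Hs : 0 < sqrt (1 - 4 * y)) by (apply sqrt_lt_R0; lra).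
  pose proof (sqrt_sqrt (1 - 4 * y) ltac:(lra)) as Hss.
  destruct (Req_dec y 0) as [->|Hy0].
  { rewrite PSeries_0, Rmult_0_r, Rminus_0_r, sqrt_1.
    unfold PS_decr_1, cbin, Binomial.C; simpl; field. }
  pose proof (PSeries_cbin y Hy) as HA.
  rewrite (PSeries_decr_1 cbin y), cbin_0 in HA
    by (apply CV_radius_inside, Rabs_lt_CV_radius, Hy; apply CV_radius_cbin).
  set (s := sqrt (1 - 4 * y)) in *.
  apply Rmult_eq_reg_l with y; [|exact Hy0].
  replace (y * PSeries (PS_decr_1 cbin) y) with (/ s - 1) by lra.
  replace y with ((1 - s * s) / 4) by lra.
  field; lra.
Qed.

Lemma cbin_harmonic_recurrence n :
  INR (S n) * cbin_harmonic (S n) - (4 * INR n + 2) * cbin_harmonic n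
  = 2 * cbin n + PS_decr_1 cbin n / 2.
Proof.
  unfold cbin_harmonic, PS_decr_1.
  replace (2 * S n)%nat with (S (S (2 * n))) by lia.
  change (harmonic (S (S (2 * n))))
    with (harmonic (2 * n) + / INR (S (2 * n)) + / INR (S (S (2 * n)))).
  pose proof (cbin_S n) as Hrec; pose proof (pos_INR n).
  rewrite !S_INR, mult_INR in *; simpl (INR 2).
  replace (cbin (S n)) with (2 * (2 * INR n + 1) * cbin n / (INR n + 1))
    by (rewrite <- Hrec; field; lra).
  field; lra.
Qed.

Lemma PSeries_cbin_add_shift t : Rabs t < / 4 ->
  PSeries (fun n => 2 * cbin n + PS_decr_1 cbin n / 2) t
  = 2 * PSeries cbin t + PSeries (PS_decr_1 cbin) t / 2.
Proof.
  intros Ht.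
  assert (Hc : Rbar_lt (Rabs t) (CV_radius cbin))
    by (apply Rabs_lt_CV_radius, Ht; apply CV_radius_cbin).
  assert (Hc1 : Rbar_lt (Rabs t) (CV_radius (PS_decr_1 cbin)))
    by (rewrite CV_radius_decr_1; exact Hc).
  transitivity (PSeries (PS_plus (PS_scal 2 cbin) (PS_scal (/ 2) (PS_decr_1 cbin))) t).
  - apply PSeries_ext; intros n.
    unfold PS_plus, PS_scal, plus, scal; simpl; unfold mult; simpl; field.
  - rewrite PSeries_plus, !PSeries_scal; [field|..];
      apply ex_pseries_scal; try apply Rmult_comm; apply CV_radius_inside; assumption.
Qed.

Lemma PSeries_cbin_harmonic y : Rabs y < / 4 ->
  PSeries cbin_harmonic y
  = / sqrt (1 - 4 * y) * ln ((1 + sqrt (1 - 4 * y)) / (2 * (1 - 4 * y))).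
Proof.
  intros Hy; pose proof (mul4_lt_1 y Hy).
  assert (Hs : 0 < sqrt (1 - 4 * y)) by (apply sqrt_lt_R0; lra).
  enough (Hprod : sqrt (1 - 4 * y) * PSeries cbin_harmonic y
                  = ln ((1 + sqrt (1 - 4 * y)) / (2 * (1 - 4 * y)))).
  { rewrite <- Hprod; field; lra. }
  refine (is_derive_ball_eq (fun t => sqrt (1 - 4 * t) * PSeries cbin_harmonic t)
            (fun t => ln ((1 + sqrt (1 - 4 * t)) / (2 * (1 - 4 * t))))
            (fun t => PSeries (fun n => 2 * cbin n + PS_decr_1 cbin n / 2) t
                      / sqrt (1 - 4 * t)) (/ 4) _ _ _ y Hy).
  - intros t Ht; apply is_derive_sqrt_mul_PSeries.
    + apply mul4_lt_1, Ht.
    + apply Rabs_lt_CV_radius, Ht; apply CV_radius_cbin_harmonic.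
    + intros n; apply cbin_harmonic_recurrence.
  - intros t Ht; pose proof (mul4_lt_1 t Ht).
    assert (Hst : 0 < sqrt (1 - 4 * t)) by (apply sqrt_lt_R0; lra).
    pose proof (sqrt_sqrt (1 - 4 * t) ltac:(lra)) as Hss.
    rewrite PSeries_cbin_add_shift, PSeries_cbin, PSeries_cbin_shift by exact Ht.
    auto_derive; replace (1 + - (4 * t)) with (1 - 4 * t) by ring.
    + repeat split; try lra.
      apply Rmult_lt_0_compat; [lra|apply Rinv_0_lt_compat; lra].
    + set (s := sqrt (1 - 4 * t)) in *; rewrite <- Hss; field; lra.
  - rewrite PSeries_0, Rmult_0_r, Rminus_0_r, sqrt_1.
    unfold cbin_harmonic; simpl harmonic.
    replace ((1 + 1) / (2 * 1)) with 1 by field; rewrite ln_1; ring.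
Qed.

Lemma PSeries_cbin_over_odd_ode t : Rabs t < / 4 ->
  PSeries cbin_over_odd t + 2 * (t * PSeries (PS_derive cbin_over_odd) t) = PSeries cbin t.
Proof.
  intros Ht.
  assert (Hb : Rbar_lt (Rabs t) (CV_radius cbin_over_odd))
    by (apply Rabs_lt_CV_radius, Ht; apply CV_radius_cbin_over_odd).
  rewrite PSeries_mul_x_derive, <- (PSeries_scal 2), <- PSeries_plus.
  - apply PSeries_ext; intros n; unfold PS_plus, PS_scal, cbin_over_odd.
    rewrite plus_INR, mult_INR; simpl (INR 2); simpl (INR 1).
    unfold plus, scal; simpl; unfold mult; simpl.
    pose proof (pos_INR n); field; lra.
  - apply CV_radius_inside, Hb.
  - apply ex_pseries_scal; [apply Rmult_comm|apply ex_pseries_INR_mul, Hb].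
Qed.

Lemma is_derive_mul_PSeries_cbin_over_odd k s : Rabs (k * s ^ 2) < / 4 ->
  is_derive (fun s => s * PSeries cbin_over_odd (k * s ^ 2)) s (PSeries cbin (k * s ^ 2)).
Proof.
  intros Hks.
  assert (Hb : Rbar_lt (Rabs (k * s ^ 2)) (CV_radius cbin_over_odd))
    by (apply Rabs_lt_CV_radius, Hks; apply CV_radius_cbin_over_odd).
  rewrite <- (PSeries_cbin_over_odd_ode _ Hks).
  auto_derive.
  - apply ex_derive_PSeries, Hb.
  - rewrite Derive_PSeries by exact Hb.
    replace (k * (s * (s * 1))) with (k * s ^ 2) by ring; ring.
Qed.

Lemma is_derive_asin x : -1 < x < 1 -> is_derive asin x (/ sqrt (1 - x ^ 2)).
Proof.
  intros Hx; apply is_derive_Reals, (derive_pt_eq_1 _ _ _ (derivable_pt_asin x Hx)).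
  rewrite derive_pt_asin; unfold Rsqr, Rdiv; rewrite Rmult_1_l; f_equal; f_equal; ring.
Qed.

Lemma Rabs_unit_mul_sqr_lt k s : Rabs k = 1 -> Rabs s < / 2 -> Rabs (k * s ^ 2) < / 4.
Proof.
  intros Hk Hs; rewrite Rabs_mult, Hk, <- RPow_abs; pose proof (Rabs_pos s); simpl; nra.
Qed.

Lemma PSeries_cbin_over_odd_pos x : 0 < x < / 4 ->
  PSeries cbin_over_odd x = asin (2 * sqrt x) / (2 * sqrt x).
Proof.
  intros Hx.
  assert (Hs : 0 < sqrt x) by (apply sqrt_lt_R0; lra).
  assert (Hsx : 1 * sqrt x ^ 2 = x) by (rewrite pow2_sqrt; lra).
  enough (Hodd : sqrt x * PSeries cbin_over_odd (1 * sqrt x ^ 2) = asin (2 * sqrt x) / 2)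
    by (rewrite Hsx in Hodd;
        replace (asin (2 * sqrt x)) with (2 * (sqrt x * PSeries cbin_over_odd x)) by lra;
        field; lra).
  refine (is_derive_ball_eq (fun s => s * PSeries cbin_over_odd (1 * s ^ 2))
            (fun s => asin (2 * s) / 2) (fun s => / sqrt (1 - 4 * (1 * s ^ 2)))
            (/ 2) _ _ _ (sqrt x) _).
  - intros s Hs2; pose proof (Rabs_unit_mul_sqr_lt 1 s Rabs_R1 Hs2) as Hks.
    rewrite <- PSeries_cbin by exact Hks; apply is_derive_mul_PSeries_cbin_over_odd, Hks.
  - intros s Hs2; pose proof (mul4_lt_1 _ (Rabs_unit_mul_sqr_lt 1 s Rabs_R1 Hs2)).
    assert (H2s : -1 < 2 * s < 1) by (apply Rabs_def2 in Hs2; lra).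
    auto_derive.
    + apply ex_derive_Reals_1, derivable_pt_asin, H2s.
    + replace (Derive (fun u => asin u) (2 * s)) with (/ sqrt (1 - (2 * s) ^ 2))
        by (symmetry; apply is_derive_unique, is_derive_asin, H2s).
      replace (1 - (2 * s) ^ 2) with (1 - 4 * (1 * s ^ 2)) by ring.
      field; apply Rgt_not_eq, sqrt_lt_R0; lra.
  - rewrite Rmult_0_l, Rmult_0_r, asin_0; field.
  - rewrite Rabs_pos_eq by lra; simpl in Hsx; nra.
Qed.

Lemma PSeries_cbin_over_odd_neg x : - / 4 < x < 0 ->
  PSeries cbin_over_odd x = ln (2 * sqrt (- x) + sqrt (1 - 4 * x)) / (2 * sqrt (- x)).
Proof.
  intros Hx.
  assert (Hs : 0 < sqrt (- x)) by (apply sqrt_lt_R0; lra).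
  assert (Hsx : -1 * sqrt (- x) ^ 2 = x) by (rewrite pow2_sqrt; lra).
  enough (Hodd : sqrt (- x) * PSeries cbin_over_odd (-1 * sqrt (- x) ^ 2)
                 = ln (2 * sqrt (- x) + sqrt (1 - 4 * (-1 * sqrt (- x) ^ 2))) / 2)
    by (rewrite Hsx in Hodd;
        replace (ln (2 * sqrt (- x) + sqrt (1 - 4 * x)))
          with (2 * (sqrt (- x) * PSeries cbin_over_odd x)) by lra;
        field; lra).
  refine (is_derive_ball_eq (fun s => s * PSeries cbin_over_odd (-1 * s ^ 2))
            (fun s => ln (2 * s + sqrt (1 - 4 * (-1 * s ^ 2))) / 2)
            (fun s => / sqrt (1 - 4 * (-1 * s ^ 2))) (/ 2) _ _ _ (sqrt (- x)) _).
  - intros s Hs2; pose proof (Rabs_unit_mul_sqr_lt (-1) s ltac:(rewrite Rabs_m1; lra) Hs2) as Hks.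
    rewrite <- PSeries_cbin by exact Hks; apply is_derive_mul_PSeries_cbin_over_odd, Hks.
  - intros s _.
    assert (H1 : 0 < 1 - 4 * (-1 * s ^ 2)) by nra.
    assert (Hq : 0 < sqrt (1 - 4 * (-1 * s ^ 2))) by (apply sqrt_lt_R0, H1).
    assert (Hq2 : sqrt (1 - 4 * (-1 * s ^ 2)) ^ 2 = 1 + 4 * s ^ 2)
      by (rewrite pow2_sqrt; lra).
    assert (Hpos : 0 < 2 * s + sqrt (1 - 4 * (-1 * s ^ 2))) by nra.
    auto_derive; replace (1 + - (4 * (-1 * (s * (s * 1))))) with (1 - 4 * (-1 * s ^ 2)) by ring.
    + repeat split; lra.
    + field; lra.
  - replace (1 - 4 * (-1 * 0 ^ 2)) with 1 by ring.
    rewrite sqrt_1, Rmult_0_l, Rmult_0_r, Rplus_0_l, ln_1; field.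
  - rewrite Rabs_pos_eq by lra; simpl in Hsx; nra.
Qed.

Lemma PSeries_cbin_over_odd x : Rabs x < / 4 -> PSeries cbin_over_odd x = asin_ratio x.
Proof.
  intros Hx; apply Rabs_def2 in Hx; unfold asin_ratio.
  destruct (Rlt_dec 0 x); [apply PSeries_cbin_over_odd_pos; lra|].
  destruct (Rlt_dec x 0); [apply PSeries_cbin_over_odd_neg; lra|].
  replace x with 0 by lra.
  rewrite PSeries_0; unfold cbin_over_odd; rewrite cbin_0; simpl; field.
Qed.

Lemma is_series_cbin_harmonic_odd x : Rabs x < / 4 ->
  is_series (fun n : nat => cbin n * harmonic (2 * n + 1) * x ^ n)
    (/ sqrt (1 - 4 * x) * ln ((1 + sqrt (1 - 4 * x)) / (2 * (1 - 4 * x)))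
     + asin_ratio x).
Proof.
  intros Hx.
  rewrite <- PSeries_cbin_harmonic, <- PSeries_cbin_over_odd by exact Hx.
  pose proof (PSeries_correct cbin_harmonic x (CV_radius_inside _ _
    (Rabs_lt_CV_radius _ _ CV_radius_cbin_harmonic Hx))) as Hharm.
  pose proof (PSeries_correct cbin_over_odd x (CV_radius_inside _ _
    (Rabs_lt_CV_radius _ _ CV_radius_cbin_over_odd Hx))) as Hodd.
  eapply is_series_ext; [|exact (is_series_plus _ _ _ _ Hharm Hodd)].
  intros n; change (pow_n x n * cbin_harmonic n + pow_n x n * cbin_over_odd n
                    = cbin n * harmonic (2 * n + 1) * x ^ n).
  rewrite pow_n_pow; unfold cbin_harmonic, cbin_over_odd.
  replace (2 * n + 1)%nat with (S (2 * n)) by lia.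
  change (harmonic (S (2 * n))) with (harmonic (2 * n) + / INR (S (2 * n))).
  field; apply not_0_INR; lia.
Qed.

Lemma asinh_ratio_asin_ratio_opp x : asinh_ratio x = asin_ratio (- x).
Proof.
  unfold asinh_ratio, asin_ratio; rewrite Ropp_involutive.
  replace (1 - 4 * - x) with (1 + 4 * x) by ring.
  destruct (Rlt_dec 0 x), (Rlt_dec 0 (- x)), (Rlt_dec (- x) 0), (Rlt_dec x 0);
    try reflexivity; lra.
Qed.

Theorem theorem20 (x : R) (hx : Rabs x < / 4) :
  is_series (fun n : nat => cbin n * harmonic (2 * n + 1) * x ^ n)
    (/ sqrt (1 - 4 * x) * ln ((1 + sqrt (1 - 4 * x)) / (2 * (1 - 4 * x)))
     + asin_ratio x)
  /\
  is_series (fun n : nat => (-1) ^ n * cbin n * harmonic (2 * n + 1) * x ^ n)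
    (/ sqrt (1 + 4 * x) * ln ((1 + sqrt (1 + 4 * x)) / (2 * (1 + 4 * x)))
     + asinh_ratio x).
Proof.
  split; [exact (is_series_cbin_harmonic_odd x hx)|].
  assert (hx' : Rabs (- x) < / 4) by (rewrite Rabs_Ropp; exact hx).
  rewrite asinh_ratio_asin_ratio_opp.
  replace (1 + 4 * x) with (1 - 4 * - x) by ring.
  eapply is_series_ext; [|exact (is_series_cbin_harmonic_odd (- x) hx')].
  intros n; change (@eq R (cbin n * harmonic (2 * n + 1) * (- x) ^ n)
                         ((-1) ^ n * cbin n * harmonic (2 * n + 1) * x ^ n)).
  replace (- x) with (-1 * x) by ring; rewrite Rpow_mult_distr; ring.
Qed.
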